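(* Let $R$ be an amenable affine algebra over a field $K$ with no zero divisors. Then there exist finite-dimensional $K$-subspaces $\overline{V}_1\subseteq V_1\subseteq\overline{V}_2\subseteq V_2\subseteq\cdots\subseteq R$ such that: (a) for every $r\in R$, $\lim_{n\to\infty}\dim_K(V_nr+V_n)/\dim_K(V_n)=1$; (b) $\lim_{n\to\infty}\dim_K(\overline{V}_n)/\dim_K(V_n)=1$; (c) for every finite-dimensional $K$-subspace $Z\subseteq R$ there exists $k>0$ such that $\overline{V}_n+\overline{V}_nZ\subseteq V_n$ for all $n>k$.
   Context: An affine algebra is a finitely generated associative algebra over $K$, not necessarily unital. For subspaces $V,Z$, $VZ$ denotes the $K$-span of all products $vz$. $R$ is amenable if there exist finite-dimensional $K$-subspaces $W_1\subseteq W_2\subseteq\cdots$ with $\bigcup_nW_n=R$ such that for every $r\in R$, $\lim_{n\to\infty}\dim_K(W_nr+W_n)/\dim_K(W_n)=1$. *)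

From HB Require Import structures.
From mathcomp Require Import all_boot all_order all_algebra.
From mathcomp Require Import boolp.
Set Implicit Arguments. Unset Strict Implicit. Unset Printing Implicit Defensive.
Import Order.TTheory GRing.Theory Num.Theory.
Local Open Scope ring_scope.

Section AffineAlgebra.
Variables (K : fieldType) (R : lmodType K).

Definition subsetR (A B : R -> Prop) : Prop := forall x, A x -> B x.

Definition kspan (s : seq R) : R -> Prop :=
  fun x => exists c : 'I_(size s) -> K, x = \sum_(i < size s) c i *: nth 0 s i.

Definition fdsub (W : R -> Prop) : Prop := exists s : seq R, W = kspan s.

(* dim_K W (kdim) : the least size of a spanning list (0 if W is not finite-dimensional,
   which never happens below). *)
Definition spanned_by (W : R -> Prop) (n : nat) : bool :=
  `[< exists s : seq R, size s = n /\ W = kspan s >].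

Definition kdim (W : R -> Prop) : nat :=
  match pselect (exists n, spanned_by W n) with
  | left H => ex_minn H
  | right _ => 0%N
  end.

Definition addsp (A B : R -> Prop) : R -> Prop :=
  fun x => exists a b, A a /\ B b /\ x = a + b.

Definition is_assoc_algebra (mul : R -> R -> R) : Prop :=
  [/\ (forall (a : K) x y z, mul (a *: x + y) z = a *: mul x z + mul y z),
      (forall (a : K) x y z, mul z (a *: x + y) = a *: mul z x + mul z y)
    & (forall x y z, mul x (mul y z) = mul (mul x y) z)].

Definition rmul (mul : R -> R -> R) (W : R -> Prop) (r : R) : R -> Prop :=
  fun x => exists w, W w /\ x = mul w r.

Definition prodsp (mul : R -> R -> R) (V Z : R -> Prop) : R -> Prop :=
  fun x => exists l : seq (K * R * R),
    (forall t, t \in l -> V t.1.2 /\ Z t.2) /\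
    x = \sum_(t <- l) t.1.1 *: mul t.1.2 t.2.

Definition subalgebra (mul : R -> R -> R) (S : R -> Prop) : Prop :=
  [/\ S 0, (forall (a : K) x y, S x -> S y -> S (a *: x + y))
    & (forall x y, S x -> S y -> S (mul x y))].

(* Affine = finitely generated as a (non-unital) K-algebra. *)
Definition affine (mul : R -> R -> R) : Prop :=
  exists gens : seq R, forall S : R -> Prop,
    subalgebra mul S -> (forall g, g \in gens -> S g) -> forall x, S x.

Definition no_zero_divisors (mul : R -> R -> R) : Prop :=
  forall x y, mul x y = 0 -> x = 0 \/ y = 0.

End AffineAlgebra.

Definition conv_to_one (f : nat -> rat) : Prop :=
  forall e : rat, 0 < e -> exists N : nat, forall n, (N <= n)%N -> `|f n - 1| < e.

Definition dimratio (a b : nat) : rat := a%:R / b%:R.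

Definition amenable (K : fieldType) (R : lmodType K) (mul : R -> R -> R) : Prop :=
  exists W : nat -> R -> Prop,
    [/\ (forall n, fdsub (W n)),
        (forall n, subsetR (W n) (W n.+1)),
        (forall x, exists n, W n x)
      & (forall r, conv_to_one (fun n => dimratio (kdim (addsp (rmul mul (W n) r) (W n))) (kdim (W n))))].

(* Let W_0 <= W_1 <= ... be a Folner exhaustion of R by finite-dimensional
   subspaces.  Submodularity of dimension shows that for every
   finite-dimensional Z, dim (W_m + W_m Z) <= (1 + e) dim W_m once m is large:
   each generator y of Z adds at most the Folner defect
   dim (W_m y + W_m) - dim W_m.  Take \bar V_n = W_(m_n) and
   V_n = W_(m_n) + W_(m_n) W_n, where m_n grows fast enough for this bound to
   hold with e = 1/(n+1) and Z = W_(p_n) containing W_n + W_n W_n, and for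
   V_(n-1) to lie in W_(m_n).  By associativity V_n r + V_n lies in
   W_(m_n) + W_(m_n) W_(p_n) for r in W_n, which gives (a) and (b); (c) holds
   as soon as Z lies in W_n. *)

From HB Require Import structures.
From mathcomp Require Import all_boot all_order all_algebra.
From mathcomp Require Import boolp.
From mathcomp Require Import lra.
Set Implicit Arguments. Unset Strict Implicit. Unset Printing Implicit Defensive.
Import Order.TTheory GRing.Theory Num.Theory.
Local Open Scope ring_scope.

Section Subspaces.
Variables (K : fieldType) (R : lmodType K).
Implicit Types (P A B : R -> Prop) (s : seq R).

Definition subspace P := P 0 /\ forall (a : K) x y, P x -> P y -> P (a *: x + y).

Lemma subspace0 P : subspace P -> P 0. Proof. by case. Qed.

Lemma subspaceD P x y : subspace P -> P x -> P y -> P (x + y).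
Proof. by case=> _ P_lin Px Py; rewrite -[x]scale1r; apply: P_lin. Qed.

Lemma subspaceZ P a x : subspace P -> P x -> P (a *: x).
Proof. by move=> P_sub Px; rewrite -[_ *: _]addr0; apply: P_sub.2 => //; apply: subspace0. Qed.

Lemma subspace_sum P (I : eqType) (r : seq I) (F : I -> R) :
  subspace P -> (forall i, i \in r -> P (F i)) -> P (\sum_(i <- r) F i).
Proof.
move=> P_sub PF; rewrite big_seq; apply: big_ind => //; first exact: subspace0.
by move=> x y; apply: subspaceD.
Qed.

Lemma kspan_subspace s : subspace (kspan s).
Proof.
split; first by exists (fun=> 0); rewrite big1 // => i _; rewrite scale0r.
move=> a _ _ [c ->] [d ->]; exists (fun i => a * c i + d i).
by rewrite scaler_sumr -big_split; apply: eq_bigr => i _; rewrite scalerDl scalerA.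
Qed.

Lemma kspan_mem s x : x \in s -> kspan s x.
Proof.
move=> xs; have i0_lt : (index x s < size s)%N by rewrite index_mem.
pose i0 := Ordinal i0_lt.
exists (fun i => (i == i0)%:R); rewrite (bigD1 i0) //= eqxx scale1r nth_index //.
by rewrite big1 ?addr0 // => i /negPf ->; rewrite scale0r.
Qed.

Lemma kspan_min P s : subspace P -> (forall x, x \in s -> P x) -> subsetR (kspan s) P.
Proof.
move=> P_sub Ps _ [c ->]; apply: subspace_sum => // i _.
by apply: subspaceZ => //; apply: Ps; apply: mem_nth.
Qed.

Lemma fdsub_subspace P : fdsub P -> subspace P.
Proof. by case=> s ->; apply: kspan_subspace. Qed.

Lemma addsp_subspace A B : subspace A -> subspace B -> subspace (addsp A B).
Proof.
move=> A_sub B_sub; split.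
  by exists 0, 0; rewrite addr0; split; [exact: subspace0 | split; [exact: subspace0 |]].
move=> a _ _ [x1 [x2 [Ax1 [Bx2 ->]]]] [y1 [y2 [Ay1 [By2 ->]]]].
exists (a *: x1 + y1), (a *: x2 + y2); split; [exact: A_sub.2|split; [exact: B_sub.2|]].
by rewrite scalerDr addrACA.
Qed.

Lemma addspl A B x : subspace B -> A x -> addsp A B x.
Proof. by move=> B_sub Ax; exists x, 0; rewrite addr0; do 2!split=> //; apply: subspace0. Qed.

Lemma addspr A B x : subspace A -> B x -> addsp A B x.
Proof. by move=> A_sub Bx; exists 0, x; rewrite add0r; split=> //; exact: subspace0. Qed.

Lemma addsp_min A B P : subspace P -> subsetR A P -> subsetR B P -> subsetR (addsp A B) P.
Proof. by move=> P_sub AP BP _ [a [b [Aa [Bb ->]]]]; apply: subspaceD; [|apply: AP|apply: BP]. Qed.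

Lemma addsp_kspan s1 s2 : addsp (kspan s1) (kspan s2) = kspan (s1 ++ s2).
Proof.
have sub12 := kspan_subspace (s1 ++ s2).
apply: funext => x; apply: propext; split; first apply: addsp_min => //.
- by apply: kspan_min => // y ys; apply: kspan_mem; rewrite mem_cat ys.
- by apply: kspan_min => // y ys; apply: kspan_mem; rewrite mem_cat ys orbT.
apply: kspan_min; first by apply: addsp_subspace; apply: kspan_subspace.
move=> y; rewrite mem_cat => /orP [] ys.
  by apply: addspl; [apply: kspan_subspace|apply: kspan_mem].
by apply: addspr; [apply: kspan_subspace|apply: kspan_mem].
Qed.

Lemma fdsub_addsp A B : fdsub A -> fdsub B -> fdsub (addsp A B).
Proof. by case=> s1 -> [s2 ->]; exists (s1 ++ s2); rewrite addsp_kspan. Qed.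

End Subspaces.

Section Kdim.
Variables (K : fieldType) (R : lmodType K).
Implicit Types (P S T A X Y : R -> Prop) (s : seq R).

Lemma kdim_kspan_le s : (kdim (kspan s) <= size s)%N.
Proof.
rewrite /kdim; case: pselect => [H|[]]; last by exists (size s); apply/asboolP; exists s.
by case: ex_minnP => m _; apply; apply/asboolP; exists s.
Qed.

Lemma kdim_spec P : fdsub P -> exists2 s, size s = kdim P & P = kspan s.
Proof.
case=> s0 P_s0; rewrite /kdim; case: pselect => [H|[]].
  by case: ex_minnP => m /asboolP [s [<- ->]] _; exists s.
by exists (size s0); apply/asboolP; exists s0.
Qed.

Lemma vspace_of_subspace (vT : vectType K) (Q : vT -> Prop) :
  subspace Q -> exists U : {vspace vT}, forall v, v \in U <-> Q v.
Proof.
move=> Q_sub.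
pose inQ (d : nat) := `[< exists U : {vspace vT}, \dim U = d /\ forall v, v \in U -> Q v >].
have inQ0 : exists d, inQ d.
  exists 0%N; apply/asboolP; exists 0%VS; rewrite dimv0; split=> // v.
  by rewrite memv0 => /eqP ->; apply: subspace0.
have inQ_le d : inQ d -> (d <= dim vT)%N.
  by move=> /asboolP [U [<- _]]; rewrite -dimvf dimvS ?subvf.
case: (ex_maxnP inQ0 inQ_le) => m /asboolP [U [dimU UQ]] U_max.
exists U => v; split=> [/UQ //|Qv]; apply/negPn/negP => vNU.
have U'Q w : w \in (U + <[v]>)%VS -> Q w.
  move=> /memv_addP [u uU [_ /vlineP [k ->] ->]].
  by apply: subspaceD => //; [apply: UQ | apply: subspaceZ].
have : (\dim (U + <[v]>) <= m)%N by apply: U_max; apply/asboolP; exists (U + <[v]>)%VS.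
rewrite -dimU leqNgt ltn_neqAle (dimv_leqif_sup (addvSl U <[v]>)).
rewrite dimvS ?addvSl // andbT negbK => /subvP/(_ v (subvP (addvSr U _) v (memv_line v))).
by rewrite (negPf vNU).
Qed.

(* R carries no dimension theory of its own, so subspaces of [kspan L] are
   transported along [lcomb] to the coordinate space 'rV_(size L). *)
Section Coordinates.
Variable L : seq R.
Local Notation N := (size L).

Definition lcomb (v : 'rV[K]_N) : R := \sum_(i < N) v 0 i *: L`_i.

Fact lcomb_is_linear : linear lcomb.
Proof.
move=> a v w; rewrite /lcomb scaler_sumr -big_split; apply: eq_bigr => i _ /=.
by rewrite !mxE scalerDl scalerA.
Qed.

HB.instance Definition _ :=
  GRing.isLinear.Build K 'rV[K]_N R *:%R lcomb lcomb_is_linear.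

Lemma kspan_lcomb x : kspan L x <-> exists v, x = lcomb v.
Proof.
split=> [[c ->]|[v ->]]; first by exists (\row_i c i); apply: eq_bigr => i _; rewrite mxE.
by exists (fun i => v 0 i).
Qed.

Lemma lcomb_vbasis (U : {vspace 'rV[K]_N}) v :
  v \in U -> kspan (map lcomb (vbasis U)) (lcomb v).
Proof.
move=> /coord_vbasis ->; rewrite linear_sum; apply: subspace_sum => [|i _].
  exact: kspan_subspace.
rewrite linearZ; apply: subspaceZ; first exact: kspan_subspace.
by apply: kspan_mem; rewrite map_f // mem_nth ?size_tuple.
Qed.

Lemma lcomb_lift s : (forall x, x \in s -> kspan L x) -> exists t, map lcomb t = s.
Proof.
elim: s => [|x s IHs] s_L; first by exists [::].
have [|t <-] := IHs; first by move=> y ys; apply: s_L; rewrite inE ys orbT.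
by have [|v ->] := (kspan_lcomb x).1; [apply: s_L; rewrite inE eqxx | exists (v :: t)].
Qed.

Definition vpreim (P : R -> Prop) : {vspace 'rV[K]_N} :=
  if pselect (exists U : {vspace 'rV[K]_N}, forall v, v \in U <-> P (lcomb v)) is left H
  then projT1 (cid H) else 0%VS.

Lemma vpreimP P : subspace P -> forall v, v \in vpreim P <-> P (lcomb v).
Proof.
move=> P_sub; rewrite /vpreim; case: pselect => [H|[]]; first exact: projT2 (cid H).
apply: vspace_of_subspace; split=> [|a v w Pv Pw]; first by rewrite linear0; apply: subspace0.
by rewrite linearP; apply: P_sub.2.
Qed.

Lemma vpreimS P Q : subspace P -> subspace Q -> subsetR P Q -> (vpreim P <= vpreim Q)%VS.
Proof. by move=> P_sub Q_sub PQ; apply/subvP => v /(vpreimP P_sub)/PQ/(vpreimP Q_sub). Qed.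

Lemma subspace_eq0 : subspace (fun x : R => x = 0).
Proof. by split=> // a _ _ -> ->; rewrite scaler0 addr0. Qed.

Definition lcomb_ker := vpreim (fun x => x = 0).

Lemma kdim_vpreim_le S : fdsub S -> subsetR S (kspan L) ->
  (kdim S + \dim lcomb_ker <= \dim (vpreim S))%N.
Proof.
move=> S_fd S_L; have S_sub := fdsub_subspace S_fd.
have ker_S : (lcomb_ker <= vpreim S)%VS.
  apply/subvP => v /(vpreimP subspace_eq0) v0.
  by apply/(vpreimP S_sub); rewrite v0; apply: subspace0.
set C := (vpreim S :\: lcomb_ker)%VS.
have dimS : \dim (vpreim S) = (\dim C + \dim lcomb_ker)%N.
  rewrite -{1}(addv_diff_cap (vpreim S) lcomb_ker) (capv_idPr ker_S).
  by rewrite dimv_disjoint_sum // capv_diff.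
suff S_C : S = kspan (map lcomb (vbasis C)).
  by rewrite dimS leq_add2r S_C (leq_trans (kdim_kspan_le _)) // size_map size_tuple.
apply: funext => x; apply: propext; split => [Sx|].
  have [v xv] := (kspan_lcomb x).1 (S_L x Sx).
  have : v \in vpreim S by apply/(vpreimP S_sub); rewrite -xv.
  rewrite -{1}(addv_diff_cap (vpreim S) lcomb_ker) (capv_idPr ker_S).
  move=> /memv_addP [c cC [k /(vpreimP subspace_eq0) k0 vck]].
  by rewrite xv vck linearD /= k0 addr0; apply: lcomb_vbasis.
apply: kspan_min => // _ /mapP [b /vbasis_mem bC ->].
by apply/(vpreimP S_sub); move: bC; apply/subvP; apply: diffvSl.
Qed.

Lemma kdim_vpreim_ge S : fdsub S -> subsetR S (kspan L) ->
  (\dim (vpreim S) <= kdim S + \dim lcomb_ker)%N.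
Proof.
move=> S_fd S_L; have [s <- S_s] := kdim_spec S_fd; subst S.
have [t ts] : exists t, map lcomb t = s.
  by apply: lcomb_lift => x xs; apply: S_L; apply: kspan_mem.
have size_t : size t = size s by rewrite -ts size_map.
have sub : (vpreim (kspan s) <= lcomb_ker + <<t>>)%VS.
  apply/subvP => v /(vpreimP (kspan_subspace s)) [c vc].
  pose w := \sum_(i < size s) c i *: t`_i.
  have wv : lcomb w = lcomb v.
    rewrite vc linear_sum; apply: eq_bigr => i _.
    by rewrite linearZ /= -(nth_map 0 0 lcomb) ?size_t // ts.
  rewrite -(subrK w v); apply: memv_add.
    by apply/(vpreimP subspace_eq0); rewrite linearB /= wv subrr.
  apply: memv_suml => i _; apply/memvZ/memv_span/mem_nth.
  by rewrite size_t.
rewrite addnC -size_t; apply: leq_trans (dimvS sub) _.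
by apply: leq_trans (dimv_add_leqif _ _).1 _; rewrite leq_add2l dim_span.
Qed.

Lemma kdim_vpreim S : fdsub S -> subsetR S (kspan L) ->
  (kdim S + \dim lcomb_ker)%N = \dim (vpreim S).
Proof. by move=> S_fd S_L; apply/eqP; rewrite eqn_leq kdim_vpreim_le ?kdim_vpreim_ge. Qed.

End Coordinates.

Lemma kdim_mono S T : fdsub S -> fdsub T -> subsetR S T -> (kdim S <= kdim T)%N.
Proof.
move=> S_fd T_fd ST; have [L T_L] := T_fd; subst T.
rewrite -(leq_add2r (\dim (lcomb_ker L))) !kdim_vpreim //.
by apply/dimvS/vpreimS => //; [apply: fdsub_subspace | apply: kspan_subspace].
Qed.

Lemma kdim_addsp_submod A X Y : fdsub A -> fdsub X -> fdsub Y ->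
  subsetR A X -> subsetR A Y ->
  (kdim (addsp X Y) + kdim A <= kdim X + kdim Y)%N.
Proof.
move=> A_fd X_fd Y_fd AX AY.
have [[x X_x] [y Y_y]] := (X_fd, Y_fd).
have [X_sub Y_sub] := (fdsub_subspace X_fd, fdsub_subspace Y_fd).
have XY_sub := addsp_subspace X_sub Y_sub.
have XY_fd : fdsub (addsp X Y) by apply: fdsub_addsp.
set L := x ++ y; have XY_L : addsp X Y = kspan L by rewrite X_x Y_y addsp_kspan.
have X_L : subsetR X (kspan L) by move=> z Xz; rewrite -XY_L; apply: addspl.
have Y_L : subsetR Y (kspan L) by move=> z Yz; rewrite -XY_L; apply: addspr.
have A_L : subsetR A (kspan L) by move=> z /AX; apply: X_L.
have sum_sub : (vpreim L (addsp X Y) <= vpreim L X + vpreim L Y)%VS.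
  apply/subvP => v /(vpreimP XY_sub) [a [b [Xa [Yb ab]]]].
  have [c ac] := (kspan_lcomb L a).1 (X_L a Xa).
  rewrite -(addrNK c v) addrC; apply: memv_add; first by apply/(vpreimP X_sub); rewrite -ac.
  by apply/(vpreimP Y_sub); rewrite linearB /= ab -ac addrC addKr.
have cap_sub : (vpreim L A <= vpreim L X :&: vpreim L Y)%VS.
  by rewrite subv_cap; apply/andP; split; apply: vpreimS => //; apply: fdsub_subspace.
have := dimv_sum_cap (vpreim L X) (vpreim L Y).
rewrite -(kdim_vpreim X_fd X_L) -(kdim_vpreim Y_fd Y_L) => dim_sum_cap.
have := leq_add (dimvS sum_sub) (dimvS cap_sub).
rewrite dim_sum_cap -(kdim_vpreim A_fd A_L) -(kdim_vpreim XY_fd) ?XY_L //.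
by rewrite addnACA [X in (_ <= X)%N]addnACA leq_add2r.
Qed.

End Kdim.

Section Bilinear.
Variables (K : fieldType) (R : lmodType K) (mul : R -> R -> R).
Hypothesis mulL : forall z, linear (mul^~ z).
Hypothesis mulR : forall z, linear (mul z).
Implicit Types (P A V Z : R -> Prop) (s : seq R).

Lemma linear_eq0 (f : R -> R) : linear f -> f 0 = 0.
Proof.
by move=> /(_ 1 0 0); rewrite !scale1r addr0 => f00; apply: (addIr (f 0)); rewrite add0r -f00.
Qed.

Lemma subspace_linear_preim P (f : R -> R) :
  linear f -> subspace P -> subspace (fun x => P (f x)).
Proof.
move=> f_lin P_sub; split=> [|a x y Px Py]; first by rewrite (linear_eq0 f_lin); apply: subspace0.
by rewrite f_lin; apply: P_sub.2.
Qed.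

Lemma kspan_cons y s z : kspan (y :: s) z -> exists a, kspan s (z - a *: y).
Proof.
case=> c ->; exists (c ord0); exists (fun i => c (lift ord0 i)).
by rewrite big_ord_recl addrAC subrr add0r.
Qed.

Lemma rmul_subspace A r : subspace A -> subspace (rmul mul A r).
Proof.
move=> A_sub; split; first by exists 0; rewrite (linear_eq0 (mulL r)); split=> //; apply: subspace0.
move=> a _ _ [u [Au ->]] [w [Aw ->]]; exists (a *: u + w).
by rewrite mulL; split=> //; apply: A_sub.2.
Qed.

Lemma rmul_kspan s r : rmul mul (kspan s) r = kspan (map (mul^~ r) s).
Proof.
apply: funext => x; apply: propext; split.
  case=> w [sw ->]; move: w sw; apply: kspan_min.
    by apply: subspace_linear_preim => //; apply: kspan_subspace.
  by move=> y ys; apply: kspan_mem; apply: map_f.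
apply: kspan_min; first by apply: rmul_subspace; apply: kspan_subspace.
by move=> _ /mapP [y ys ->]; exists y; split=> //; apply: kspan_mem.
Qed.

Lemma fdsub_rmul A r : fdsub A -> fdsub (rmul mul A r).
Proof. by case=> s ->; exists (map (mul^~ r) s); rewrite rmul_kspan. Qed.

Lemma prodsp_subspace V Z : subspace (prodsp mul V Z).
Proof.
split; first by exists [::]; rewrite big_nil.
move=> a _ _ [l1 [l1VZ ->]] [l2 [l2VZ ->]].
exists ([seq (a * t.1.1, t.1.2, t.2) | t <- l1] ++ l2); split.
  by move=> t; rewrite mem_cat => /orP [/mapP [u /l1VZ ? ->]|/l2VZ].
rewrite big_cat big_map /= scaler_sumr; congr (_ + _).
by apply: eq_bigr => t _; rewrite scalerA.
Qed.

Lemma prodsp_mem V Z v z : V v -> Z z -> prodsp mul V Z (mul v z).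
Proof.
move=> Vv Zz; exists [:: (1, v, z)]; rewrite big_seq1 scale1r; split=> //.
by move=> t; rewrite inE => /eqP ->.
Qed.

Lemma prodsp_min V Z P : subspace P ->
  (forall v z, V v -> Z z -> P (mul v z)) -> subsetR (prodsp mul V Z) P.
Proof.
move=> P_sub VZ_P _ [l [lVZ ->]]; apply: subspace_sum => // t /lVZ [Vt Zt].
by apply: subspaceZ => //; apply: VZ_P.
Qed.

Lemma prodsp_mono V V' Z Z' : subsetR V V' -> subsetR Z Z' ->
  subsetR (prodsp mul V Z) (prodsp mul V' Z').
Proof.
move=> VV' ZZ'; apply: prodsp_min; first exact: prodsp_subspace.
by move=> v z /VV' Vv /ZZ' Zz; apply: prodsp_mem.
Qed.

Lemma prodsp_kspan s1 s2 :
  prodsp mul (kspan s1) (kspan s2) = kspan [seq mul x y | x <- s1, y <- s2].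
Proof.
set S := kspan [seq mul x y | x <- s1, y <- s2]; have S_sub : subspace S by apply: kspan_subspace.
apply: funext => x; apply: propext; split; last first.
  apply: kspan_min; first exact: prodsp_subspace.
  by move=> _ /allpairsP [[v z] /= [vs zs ->]]; apply: prodsp_mem; apply: kspan_mem.
apply: prodsp_min => [//|v z s1v s2z].
have s1_mul u : u \in s1 -> S (mul u z).
  move=> us1; move: z s2z; apply: kspan_min; first exact: subspace_linear_preim.
  by move=> z zs2; apply: kspan_mem; apply: allpairs_f.
by move: v s1v; apply: kspan_min => //; apply: subspace_linear_preim.
Qed.

Lemma fdsub_prodsp V Z : fdsub V -> fdsub Z -> fdsub (prodsp mul V Z).
Proof. by case=> s1 -> [s2 ->]; eexists; rewrite prodsp_kspan. Qed.

Lemma addsp_prodsp_cons A y s : subspace A ->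
  subsetR (addsp A (prodsp mul A (kspan (y :: s))))
          (addsp (addsp (rmul mul A y) A) (addsp A (prodsp mul A (kspan s)))).
Proof.
move=> A_sub; have A'_sub := addsp_subspace (rmul_subspace y A_sub) A_sub.
have As_sub := addsp_subspace A_sub (prodsp_subspace A (kspan s)).
have sum_sub := addsp_subspace A'_sub As_sub.
apply: addsp_min => // [x Ax|].
  by apply: (addspr A'_sub); apply: addspl (prodsp_subspace _ _) Ax.
apply: prodsp_min => // v z Av /kspan_cons [a sz].
have -> : z = a *: y + (z - a *: y) by rewrite addrC subrK.
rewrite mulR -(scalable_linear (mulL y)); apply: subspaceD => //.
  by apply: addspl => //; apply: addspl => //; exists (a *: v); split=> //; apply: subspaceZ.
by apply: addspr => //; apply: addspr => //; apply: prodsp_mem.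
Qed.

End Bilinear.

Definition eventually (P : nat -> Prop) := exists N, forall n, (N <= n)%N -> P n.

Lemma eventually_and (P Q : nat -> Prop) :
  eventually P -> eventually Q -> eventually (fun n => P n /\ Q n).
Proof.
move=> [M PM] [N QN]; exists (maxn M N) => n; rewrite geq_max => /andP [Mn Nn].
by split; [apply: PM | apply: QN].
Qed.

Lemma conv_to_one_inv_succ (f : nat -> rat) :
  eventually (fun n => `|f n - 1| <= n.+1%:R^-1) -> conv_to_one f.
Proof.
move=> [n0 f_near] e e_gt0; set N := Num.Def.archi_bound e^-1.
have inv_lt : N.+1%:R^-1 < e.
  rewrite -[e]invrK ltf_pV2 ?posrE ?ltr0n ?invr_gt0 //.
  by apply: lt_trans (archi_boundP _) _; rewrite ?ltr_nat ?invr_ge0 ?ltW.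
exists (maxn n0 N) => n; rewrite geq_max => /andP [n0n Nn].
apply: le_lt_trans (f_near n n0n) (le_lt_trans _ inv_lt).
by rewrite lef_pV2 ?posrE ?ltr0n // ler_nat ltnS.
Qed.

Lemma dimratio_ge_near1 (x y : nat) (e : rat) : (0 < y)%N -> (y <= x)%N ->
  x%:R <= (1 + e) * y%:R -> `|dimratio x y - 1| <= e.
Proof.
move=> y_gt0 yx x_le; have y_pos : 0 < y%:R :> rat by rewrite ltr0n.
have ge1 : 1 <= x%:R / y%:R :> rat by rewrite ler_pdivlMr // mul1r ler_nat.
have le1e : x%:R / y%:R <= 1 + e :> rat by rewrite ler_pdivrMr.
by rewrite /dimratio ler_norml; apply/andP; split; lra.
Qed.

Lemma dimratio_le_near1 (x y : nat) (e : rat) : 0 <= e -> (0 < x)%N -> (x <= y)%N ->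
  y%:R <= (1 + e) * x%:R -> `|dimratio x y - 1| <= e.
Proof.
move=> e_ge0 x_gt0 xy y_le.
have x_pos : 0 < x%:R :> rat by rewrite ltr0n.
have y_pos : 0 < y%:R :> rat by rewrite ltr0n (leq_trans x_gt0).
have xy' : x%:R <= y%:R :> rat by rewrite ler_nat.
have le1 : x%:R / y%:R <= 1 :> rat by rewrite ler_pdivrMr // mul1r.
have ge1e : 1 - e <= x%:R / y%:R :> rat by rewrite ler_pdivlMr //; nra.
by rewrite /dimratio ler_norml; apply/andP; split; lra.
Qed.

Section FolnerExhaustion.
Variables (K : fieldType) (R : lmodType K) (mul : R -> R -> R).
Hypothesis mulL : forall z, linear (mul^~ z).
Hypothesis mulR : forall z, linear (mul z).
Variable W : nat -> R -> Prop.
Hypothesis W_fd : forall n, fdsub (W n).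
Hypothesis W_nest : forall n, subsetR (W n) (W n.+1).
Hypothesis W_exhaust : forall x, exists n, W n x.
Hypothesis W_folner : forall r,
  conv_to_one (fun n => dimratio (kdim (addsp (rmul mul (W n) r) (W n))) (kdim (W n))).

Lemma W_subspace n : subspace (W n). Proof. exact: fdsub_subspace. Qed.

Lemma W_mono m n : (m <= n)%N -> subsetR (W m) (W n).
Proof.
move=> /subnK <-; elim: (n - m)%N => [//|k IHk] x /IHk.
by rewrite addSn; apply: W_nest.
Qed.

Lemma W_exhaust_fdsub P : fdsub P -> exists k, subsetR P (W k).
Proof.
case=> s ->; suff [k s_W] : exists k, forall x, x \in s -> W k x.
  by exists k; apply: kspan_min => //; apply: W_subspace.
elim: s => [|y s [k s_W]]; first by exists 0%N.
have [n Wy] := W_exhaust y; exists (maxn n k) => x; rewrite inE => /orP [/eqP ->|xs].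
  by apply: W_mono Wy; apply: leq_maxl.
by apply: W_mono (s_W x xs); apply: leq_maxr.
Qed.

Lemma folner_kdim_gt0 : eventually (fun m => 0 < kdim (W m))%N.
Proof.
(* If W m = 0, the Folner ratio is 0 / 0 = 0, at distance 1 from 1. *)
have [N N_near] := W_folner 0 ltr01; exists N => m /N_near.
rewrite lt0n; apply: contraTN => /eqP ->.
by rewrite /dimratio invr0 mulr0 sub0r normrN normr1 ltxx.
Qed.

Lemma folner_rmul r (e : rat) : 0 < e -> eventually (fun m =>
  (kdim (addsp (rmul mul (W m) r) (W m)))%:R <= (1 + e) * (kdim (W m))%:R :> rat).
Proof.
move=> e_gt0; have [N N_near] := eventually_and folner_kdim_gt0 (W_folner r e_gt0).
exists N => m /N_near [dim_gt0]; rewrite /dimratio ltr_norml => /andP [_].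
by rewrite ltrBlDr ltr_pdivrMr ?ltr0n // addrC => /ltW.
Qed.

Lemma folner_prodsp s (e : rat) : 0 < e -> eventually (fun m =>
  (kdim (addsp (W m) (prodsp mul (W m) (kspan s))))%:R <= (1 + e) * (kdim (W m))%:R :> rat).
Proof.
elim: s e => [|y s IHs] e e_gt0.
  exists 0%N => m _; apply: (@le_trans _ _ (kdim (W m))%:R).
    rewrite ler_nat kdim_mono //.
      by apply: fdsub_addsp => //; apply: fdsub_prodsp => //; exists [::].
    apply: addsp_min => //; first exact: W_subspace.
    apply: prodsp_min; first exact: W_subspace.
    move=> v _ _ [c ->]; rewrite big_ord0 (linear_eq0 (mulR v)).
    exact: subspace0 (W_subspace m).
  by rewrite ler_peMl // lerDl ltW.
(* Submodularity for W m inside W m y + W m and W m + W m (kspan s). *)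
have e2_gt0 : 0 < e / 2 by rewrite divr_gt0.
have [N N_near] := eventually_and (IHs _ e2_gt0) (folner_rmul y e2_gt0).
exists N => m /N_near [Ys_le Xy_le]; set A := W m in Ys_le Xy_le *.
set Xy := addsp (rmul mul A y) A in Xy_le; set Ys := addsp A _ in Ys_le.
have A_fd : fdsub A by apply: W_fd.
have Xy_fd : fdsub Xy by apply: fdsub_addsp => //; apply: fdsub_rmul.
have Ys_fd : fdsub Ys by apply: fdsub_addsp => //; apply: fdsub_prodsp => //; exists s.
have YZ_fd : fdsub (addsp A (prodsp mul A (kspan (y :: s)))).
  by apply: fdsub_addsp => //; apply: fdsub_prodsp => //; exists (y :: s).
have YZ_le := kdim_mono YZ_fd (fdsub_addsp Xy_fd Ys_fd)
  (addsp_prodsp_cons mulL mulR (y := y) (s := s) (W_subspace m)).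
have submod := kdim_addsp_submod A_fd Xy_fd Ys_fd
  (fun x Ax => addspr (rmul_subspace mulL y (W_subspace m)) Ax)
  (fun x Ax => addspl (prodsp_subspace mul _ _) Ax).
move: (leq_trans (leq_add YZ_le (leqnn (kdim A))) submod).
rewrite -(ler_nat rat) !natrD => dim_le.
have := ler0n rat (kdim A); nra.
Qed.

Hypothesis mulA : forall x y z, mul x (mul y z) = mul (mul x y) z.

(* The paper's V_n and \bar V_n are [thick (mm n) n] and [W (mm n)]. *)
Definition thick m n := addsp (W m) (prodsp mul (W m) (W n)).

Lemma fdsub_thick m n : fdsub (thick m n).
Proof. by apply: fdsub_addsp => //; apply: fdsub_prodsp. Qed.

Lemma thick_subspace m n : subspace (thick m n).
Proof. exact/fdsub_subspace/fdsub_thick. Qed.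

Lemma W_sub_thick m n : subsetR (W m) (thick m n).
Proof. by move=> x; apply: addspl; apply: prodsp_subspace. Qed.

Lemma thickS m n n' : subsetR (W n) (W n') -> subsetR (thick m n) (thick m n').
Proof.
move=> WW'; apply: addsp_min; [exact: thick_subspace | exact: W_sub_thick |].
by move=> x Px; apply: addspr; [apply: W_subspace | apply: prodsp_mono Px].
Qed.

Lemma thick_rmul m n p r : subsetR (thick n n) (W p) -> W n r ->
  subsetR (addsp (rmul mul (thick m n) r) (thick m n)) (thick m p).
Proof.
move=> np Wr; have Wnp : subsetR (W n) (W p) by move=> x /(W_sub_thick n) /np.
have Tp_sub := thick_subspace m p.
apply: addsp_min => //; last exact: thickS.
move=> _ [_ [[a [b [Wa [Pb ->]]]] ->]].
rewrite (GRing.semilinear_linear (mulL r)).2; apply: subspaceD => //.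
  by apply: addspr; [apply: W_subspace | apply: prodsp_mem => //; apply: Wnp].
move: b Pb; apply: prodsp_min; first exact: subspace_linear_preim.
move=> v z Wv Wz; rewrite -mulA; apply: addspr; first exact: W_subspace.
by apply: prodsp_mem => //; apply/np/addspr; [apply: W_subspace | apply: prodsp_mem].
Qed.

Lemma folner_thick n (e : rat) : 0 < e -> eventually (fun m =>
  (0 < kdim (W m))%N /\ (kdim (thick m n))%:R <= (1 + e) * (kdim (W m))%:R).
Proof.
move=> e_gt0; have [s W_s] := W_fd n; rewrite /thick W_s.
exact: eventually_and folner_kdim_gt0 (folner_prodsp s e_gt0).
Qed.

Lemma thick_exhaust : exists p : nat -> nat, forall n, subsetR (thick n n) (W (p n)).
Proof. by have [p] := choice (fun n => W_exhaust_fdsub (fdsub_thick n n)); exists p. Qed.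

Lemma folner_thick_seq (p : nat -> nat) : exists mm : nat -> nat, forall n,
  [/\ (0 < kdim (W (mm n)))%N,
      (kdim (thick (mm n) (p n)))%:R <= (1 + n.+1%:R^-1) * (kdim (W (mm n)))%:R :> rat
    & subsetR (thick (mm n) n) (W (mm n.+1))].
Proof.
have eps_gt0 n : 0 < n.+1%:R^-1 :> rat by rewrite invr_gt0 ltr0n.
have [N N_thick] := choice (fun n => folner_thick (p n) (eps_gt0 n)).
have [q q_thick] := choice (fun mn : nat * nat => W_exhaust_fdsub (fdsub_thick mn.1 mn.2)).
pose fix mm n := if n is n'.+1 then maxn (N n) (q (mm n', n')) else N 0%N.
exists mm => n; have [] := N_thick n (mm n); first by case: n => //= n; apply: leq_maxl.
by split=> // x Tx; apply: W_mono (q_thick (mm n, n) x Tx); apply: leq_maxr.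
Qed.

Lemma kdim_W_thick m n : (kdim (W m) <= kdim (thick m n))%N.
Proof. exact: kdim_mono (fdsub_thick m n) (W_sub_thick n). Qed.

Variables p mm : nat -> nat.
Hypothesis p_thick : forall n, subsetR (thick n n) (W (p n)).
Hypothesis mm_spec : forall n,
  [/\ (0 < kdim (W (mm n)))%N,
      (kdim (thick (mm n) (p n)))%:R <= (1 + n.+1%:R^-1) * (kdim (W (mm n)))%:R :> rat
    & subsetR (thick (mm n) n) (W (mm n.+1))].

Lemma W_sub_Wp n : subsetR (W n) (W (p n)).
Proof. by move=> x /(W_sub_thick n) /p_thick. Qed.

Lemma thick_seq_folner r : conv_to_one (fun n =>
  dimratio (kdim (addsp (rmul mul (thick (mm n) n) r) (thick (mm n) n))) (kdim (thick (mm n) n))).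
Proof.
have [n0 Wr] := W_exhaust r; apply: conv_to_one_inv_succ; exists n0 => n n0n.
have [dim_gt0 dim_le _] := mm_spec n.
set V := thick (mm n) n; set X := addsp (rmul mul V r) V.
have X_fd : fdsub X := fdsub_addsp (fdsub_rmul mulL r (fdsub_thick _ _)) (fdsub_thick _ _).
have V_X : (kdim V <= kdim X)%N.
  apply: kdim_mono X_fd _; first exact: fdsub_thick.
  by move=> x; apply: addspr; apply/rmul_subspace/thick_subspace.
have X_T : (kdim X <= kdim (thick (mm n) (p n)))%N.
  exact: kdim_mono X_fd (fdsub_thick _ _) (thick_rmul (@p_thick n) (W_mono n0n Wr)).
have W_V := kdim_W_thick (mm n) n.
apply: dimratio_ge_near1 => //; first exact: leq_trans W_V.
have eps1_gt0 : 0 < 1 + n.+1%:R^-1 :> rat by rewrite addr_gt0 ?invr_gt0 ?ltr0n.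
apply: le_trans (_ : _ <= (kdim (thick (mm n) (p n)))%:R) _; first by rewrite ler_nat.
by apply: le_trans dim_le _; rewrite ler_pM2l ?ler_nat.
Qed.

Lemma W_seq_dense :
  conv_to_one (fun n => dimratio (kdim (W (mm n))) (kdim (thick (mm n) n))).
Proof.
apply: conv_to_one_inv_succ; exists 0%N => n _; have [dim_gt0 dim_le _] := mm_spec n.
apply: dimratio_le_near1 => //; [by rewrite invr_ge0 | exact: kdim_W_thick |].
apply: le_trans dim_le; rewrite ler_nat.
by apply: kdim_mono (fdsub_thick _ _) (fdsub_thick _ _) (thickS (@W_sub_Wp n)).
Qed.

Lemma W_seq_absorb Z : fdsub Z -> exists k, (0 < k)%N /\ forall n, (k < n)%N ->
  subsetR (addsp (W (mm n)) (prodsp mul (W (mm n)) Z)) (thick (mm n) n).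
Proof.
move=> /W_exhaust_fdsub [k Z_W]; exists k.+1; split=> // n kn.
apply: addsp_min; [exact: thick_subspace | exact: W_sub_thick |].
move=> x Px; apply: addspr; first exact: W_subspace.
by apply: prodsp_mono Px => // z /Z_W; apply: W_mono; rewrite ltnW // ltnW.
Qed.

End FolnerExhaustion.

Theorem lemma3 (K : fieldType) (R : lmodType K) (mul : R -> R -> R) :
  is_assoc_algebra mul -> affine mul -> amenable mul -> no_zero_divisors mul ->
  exists Vb V : nat -> R -> Prop,
    [/\ (forall n, fdsub (Vb n) /\ fdsub (V n)),
        (forall n, subsetR (Vb n) (V n) /\ subsetR (V n) (Vb n.+1)),
        (forall r, conv_to_one (fun n => dimratio (kdim (addsp (rmul mul (V n) r) (V n))) (kdim (V n)))),
        conv_to_one (fun n => dimratio (kdim (Vb n)) (kdim (V n)))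
      & (forall Z : R -> Prop, fdsub Z ->
           exists k : nat, (0 < k)%N /\
             forall n, (k < n)%N -> subsetR (addsp (Vb n) (prodsp mul (Vb n) Z)) (V n))].
Proof.
case=> mulL mulR mulA _ [W [W_fd W_nest W_exhaust W_folner]] _.
have mulL' z : linear (mul^~ z) by move=> a x y; apply: mulL.
have mulR' z : linear (mul z) by move=> a x y; apply: mulR.
have [p p_thick] := thick_exhaust mulL' mulR' W_fd W_nest W_exhaust.
have [mm mm_spec] := folner_thick_seq mulL' mulR' W_fd W_nest W_exhaust W_folner p.
exists (fun n => W (mm n)), (fun n => thick mul W (mm n) n); split.
- by move=> n; split; [apply: W_fd | apply: fdsub_thick].
- by move=> n; split; [apply: W_sub_thick | case: (mm_spec n)].
- exact: thick_seq_folner p_thick mm_spec.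
- exact: W_seq_dense p_thick mm_spec.
- exact: W_seq_absorb.
Qed.
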